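(* Any two of the following three equalities imply the third: (i) $c_{n,k}=\prod_{j=k}^{n-1}\frac{g_{j+1}}{h_n-h_j}$ for $0\le k<n$ and $c_{n,n}=1$; (ii) $Lu_n=h_nu_n$ for all $n\ge0$; (iii) $Lv_n=h_nv_n+g_nv_{n-1}$ for $n>0$ and $Lv_0=h_0v_0$.
   Context: Let $h_k$, $x_k$, $g_k$ ($k=0,1,2,\ldots$) be given sequences such that all $h_k$ are distinct. Define monic Newton type polynomials $v_k(x)=(x-x_0)(x-x_1)\cdots(x-x_{k-1})$ for $k\ge1$ and $v_0(x)=1$. Let $u_n(x)=\sum_{k=0}^n c_{n,k}\,v_k(x)$ be monic polynomials of degree $n$ (so $c_{n,n}=1$), and let $L$ be a linear operator on the space of polynomials. *)

From HB Require Import structures.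
From mathcomp Require Import all_boot all_order all_algebra.
Set Implicit Arguments. Unset Strict Implicit. Unset Printing Implicit Defensive.
Import GRing.Theory.
Local Open Scope ring_scope.

Definition vpoly (R : fieldType) (x : nat -> R) (k : nat) : {poly R} :=
  \prod_(i < k) ('X - (x i)%:P).

Definition upoly (R : fieldType) (c : nat -> nat -> R) (x : nat -> R) (n : nat)
  : {poly R} := \sum_(k < n.+1) c n k *: vpoly x k.

(* Put E_k := L v_k - h_k v_k - g_k v_{k-1}, the failure of (iii) at k, and
   d_{n,k} := c_{n,k} (h_n - h_k) - c_{n,k+1} g_{k+1}.  Expanding u_n in the
   Newton basis gives
     L u_n - h_n u_n = sum_{k <= n} c_{n,k} E_k - sum_{k < n} d_{n,k} v_k.
   Since the h_k are distinct, (i) telescopes to d_{n,k} = 0 for all k < n,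
   and (iii) says E_k = 0 for all k.  Any two conditions now give the third:
   the v_k have distinct degrees, so they are linearly independent, and the
   matrix (c_{n,k}) is unitriangular. *)

From mathcomp Require Import all_boot all_algebra.
Set Implicit Arguments. Unset Strict Implicit. Unset Printing Implicit Defensive.
Import GRing.Theory.
Local Open Scope ring_scope.

Lemma sum_unitriangular_eq0 (R : ringType) (V : lmodType R)
    (c : nat -> nat -> R) (e : nat -> V) :
  (forall n, c n n = 1) -> (forall n, \sum_(k < n.+1) c n k *: e k = 0) ->
  forall n, e n = 0.
Proof.
move=> c_diag sum_eq0; elim/ltn_ind=> n IHn.
have := sum_eq0 n; rewrite big_ord_recr /= c_diag scale1r big1 ?add0r //.
by move=> k _; rewrite IHn ?scaler0.
Qed.

Lemma suffix_prodP (R : ringType) (a r : nat -> R) n : a n = 1 ->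
  (forall k, (k < n)%N -> a k = \prod_(k <= j < n) r j) <->
  (forall k, (k < n)%N -> a k = r k * a k.+1).
Proof.
move=> an1; split=> [prodE k ltkn | recE].
  rewrite prodE // big_ltn //; congr (_ * _).
  have [/prodE -> // | lenk1] := ltnP k.+1 n.
  have -> : k.+1 = n by apply/anti_leq; rewrite lenk1 ltkn.
  by rewrite big_geq.
suff prod_sub d : (d <= n)%N -> a (n - d)%N = \prod_(n - d <= j < n) r j.
  by move=> k /ltnW lekn; rewrite -(subKn lekn) prod_sub ?leq_subr.
elim: d => [_ | d IHd ltdn]; first by rewrite subn0 an1 big_geq.
have ltn_sub : (n - d.+1 < n)%N by rewrite ltn_subrL (leq_ltn_trans _ ltdn).
by rewrite big_ltn // recE // subnSK // IHd // ltnW.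
Qed.

Section NewtonBasis.
Variables (R : fieldType) (x : nat -> R).

Lemma size_vpoly k : size (vpoly x k) = k.+1.
Proof. by rewrite /vpoly size_prod_XsubC -[in RHS](card_ord k) cardT enumT. Qed.

Lemma vpoly_monic k : vpoly x k \is monic.
Proof. exact: monic_prod_XsubC. Qed.

Lemma vpoly_free n (a : nat -> R) :
  \sum_(k < n) a k *: vpoly x k = 0 -> forall k, (k < n)%N -> a k = 0.
Proof.
elim: n => [// | n IHn]; rewrite big_ord_recr /= => sum_eq0.
have an0 : a n = 0.
  have vn_top : (vpoly x n)`_n = 1.
    by have := monicP (vpoly_monic n); rewrite /lead_coef size_vpoly.
  have := congr1 (coefp n) sum_eq0; rewrite /= coefD coefZ vn_top.
  rewrite mulr1 coef_sum big1 ?add0r ?coef0 // => k _.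
  by rewrite coefZ nth_default ?mulr0 // size_vpoly.
move: sum_eq0; rewrite an0 scale0r addr0 => /IHn sum_eq0 k.
by rewrite ltnS leq_eqVlt => /predU1P[-> | /sum_eq0].
Qed.

End NewtonBasis.

Section Coefficients.
Variables (R : fieldType) (h g : nat -> R) (c : nat -> nat -> R).
Hypotheses (h_inj : injective h) (c_monic : forall n, c n n = 1).

Definition coef_defect n k := c n k * (h n - h k) - c n k.+1 * g k.+1.

Lemma coef_product_formulaP n :
  (forall k, (k < n)%N -> c n k = \prod_(k <= j < n) (g j.+1 / (h n - h j))) <->
  (forall k, (k < n)%N -> coef_defect n k = 0).
Proof.
have hn_neq k : (k < n)%N -> h n - h k != 0.
  by move=> ltkn; rewrite subr_eq0 (inj_eq h_inj) gtn_eqF.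
apply: iff_trans (suffix_prodP _ (c_monic n)) _; split=> cE k ltkn; have := cE k ltkn.
  by rewrite /coef_defect => ->; rewrite mulrAC divfK ?hn_neq // mulrC subrr.
move=> /eqP; rewrite subr_eq0 => /eqP cD.
by apply: (mulIf (hn_neq k ltkn)); rewrite cD mulrAC divfK ?hn_neq // mulrC.
Qed.

End Coefficients.

Section EigenOperator.
Variables (R : fieldType) (L : {linear {poly R} -> {poly R}}).
Variables (h g x : nat -> R) (c : nat -> nat -> R).

Definition lower_term k : {poly R} := if k is m.+1 then g k *: vpoly x m else 0.

Definition vpoly_defect k := L (vpoly x k) - h k *: vpoly x k - lower_term k.

Lemma vpoly_recurrenceP :
  ((forall n, (0 < n)%N -> L (vpoly x n) = h n *: vpoly x n + g n *: vpoly x n.-1)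
     /\ L (vpoly x 0) = h 0%N *: vpoly x 0) <->
  (forall k, vpoly_defect k = 0).
Proof.
rewrite /vpoly_defect; split=> [[Lv Lv0] [|k] | dE].
- by rewrite Lv0 !subrr.
- by rewrite Lv // [h _ *: _ + _]addrC addrK subrr.
split=> [[//|n] _ | ]; last by have := dE 0%N; rewrite /= subr0 => /subr0_eq.
have /subr0_eq/eqP := dE n.+1; rewrite subr_eq => /eqP ->.
by rewrite addrC.
Qed.

Lemma upoly_eigen_defect n :
  L (upoly c x n) - h n *: upoly c x n =
  \sum_(k < n.+1) c n k *: vpoly_defect k
  - \sum_(k < n) coef_defect h g c n k *: vpoly x k.
Proof.
have Lv_shift k : L (vpoly x k) - h n *: vpoly x k =
    vpoly_defect k + (h k - h n) *: vpoly x k + lower_term k.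
  by rewrite /vpoly_defect scalerBl addrAC subrK addrA subrK.
rewrite /upoly linear_sum scaler_sumr -sumrB.
(* Only two distributions: a third would unfold [vpoly_defect k], itself a sum. *)
under eq_bigr => k _ do
  rewrite linearZ /= scalerA [h n * _]mulrC -scalerA -scalerBr Lv_shift
          2![c n k *: (_ + _)]scalerDr.
rewrite !big_split /= -addrA; congr (_ + _).
rewrite big_ord_recr big_ord_recl /= subrr scale0r !scaler0 addr0 add0r.
rewrite -big_split -sumrN; apply: eq_bigr => k _.
rewrite /bump add1n /= !scalerA -scalerDl -scaleNr /coef_defect.
by congr (_ *: _); rewrite opprB -[h k - h n]opprB mulrN addrC.
Qed.

End EigenOperator.

Theorem mainTheorem1 (R : fieldType) (h x g : nat -> R) (c : nat -> nat -> R)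
  (L : {linear {poly R} -> {poly R}})
  (h_inj : injective h)
  (c_monic : forall n : nat, c n n = 1) :
  let P1 := forall n k : nat, (k < n)%N ->
              c n k = \prod_(k <= j < n) (g j.+1 / (h n - h j)) in
  let P2 := forall n : nat, L (upoly c x n) = h n *: upoly c x n in
  let P3 := (forall n : nat, (0 < n)%N ->
               L (vpoly x n) = h n *: vpoly x n + g n *: vpoly x n.-1)
            /\ L (vpoly x 0) = h 0%N *: vpoly x 0 in
  (P1 -> P2 -> P3) /\ (P1 -> P3 -> P2) /\ (P2 -> P3 -> P1).
Proof.
move=> P1 P2 P3.
have eigen_defect_P1 : P1 -> forall n,
    L (upoly c x n) - h n *: upoly c x n = \sum_(k < n.+1) c n k *: vpoly_defect L h g x k.
  move=> cE n; rewrite (upoly_eigen_defect L h g) [X in _ - X]big1 ?subr0 // => k _.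
  by rewrite (coef_product_formulaP g h_inj c_monic n).1 ?scale0r //; apply: cE.
split; [|split].
- move=> /eigen_defect_P1 uE uL; apply/vpoly_recurrenceP.
  by apply: (sum_unitriangular_eq0 c_monic) => n; rewrite -uE uL subrr.
- move=> /eigen_defect_P1 uE /vpoly_recurrenceP vE n; apply/subr0_eq.
  by rewrite uE big1 // => k _; rewrite vE scaler0.
- move=> uL /vpoly_recurrenceP vE n; apply/(coef_product_formulaP g h_inj c_monic).
  have := upoly_eigen_defect L h g x c n; rewrite uL subrr big1 => [|k _].
    by rewrite sub0r => /esym/eqP; rewrite oppr_eq0 => /eqP /vpoly_free.
  by rewrite vE scaler0.
Qed.
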